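(* Let $n\ge 3$ and $k\ge 1$. Let $G=C_n$ be the cycle $g_1g_2\cdots g_ng_1$ and let $H=C_{3k+2}$ have vertex set $\{1,2,\dots,3k+2\}$ with $i$ adjacent to $i+1$ for $1\le i\le 3k+1$ and $3k+2$ adjacent to $1$. Define $f\colon V(G)\to V(H)$ by $f(g_i)=1$ if $i\equiv 1\pmod 4$, $f(g_i)=2$ if $i\equiv 2\pmod 4$, and $f(g_i)=3$ otherwise ($i\in\{1,\dots,n\}$). Then \[ \gamma(G\otimes_f H)\le kn+\left\lfloor \frac n2\right\rfloor+\left\lceil \frac n4\right\rceil-\left\lfloor \frac n4\right\rfloor . \]
   Context: $\gamma$ denotes the domination number. For graphs $G,H$ and a function $f\colon V(G)\to V(H)$, the Sierpiński product $G\otimes_f H$ is the graph with vertex set $V(G)\times V(H)$ and edges of two types: (type 1) $(g,h)(g,h')$ for every $g\in V(G)$ and every edge $hh'\in E(H)$; (type 2) $(g,f(g'))(g',f(g))$ for every edge $gg'\in E(G)$. *)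

From mathcomp Require Import all_boot.
Set Implicit Arguments. Unset Strict Implicit. Unset Printing Implicit Defensive.

(* Cycle on vertices 'I_n: i ~ j iff j = i+1 mod n or i = j+1 mod n.
   Ordinal i (0-based) stands for the paper's vertex i+1. *)
Definition cycle_rel (n : nat) : rel 'I_n :=
  fun i j => (val j == i.+1 %% n) || (val i == j.+1 %% n).

Definition dominating (T : finType) (e : rel T) (D : {set T}) : bool :=
  [forall x, (x \in D) || [exists y in D, e y x]].

Lemma dominating_exists (T : finType) (e : rel T) :
  exists m, [exists D : {set T}, dominating e D && (#|D| == m)].
Proof.
exists #|[set: T]|; apply/existsP; exists [set: T]; rewrite eqxx andbT.
by apply/forallP => x; rewrite in_setT.
Qed.

Definition domination_number (T : finType) (e : rel T) : nat :=
  ex_minn (dominating_exists e).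

Definition sierpinski_rel (TG TH : finType) (eG : rel TG) (eH : rel TH)
  (f : TG -> TH) : rel (TG * TH) :=
  fun a b =>
    ((a.1 == b.1) && eH a.2 b.2)
    || [&& eG a.1 b.1, a.2 == f b.1 & b.2 == f a.1].

(* The function f of the theorem: G = C_n, H = C_(3k+2), with
   ordinal i <-> g_(i+1) and ordinal j <-> vertex j+1 of H. *)
Definition f_paper (n k : nat) (i : 'I_n) : 'I_((3 * k).+2) :=
  let r := (i.+1) %% 4 in
  if r == 1 then inord 0 else if r == 2 then inord 1 else inord 2.
Arguments f_paper : clear implicits.
Arguments cycle_rel : clear implicits.

From mathcomp Require Import all_boot.
From mathcomp Require Import zify.
Set Implicit Arguments. Unset Strict Implicit. Unset Printing Implicit Defensive.

(* Index H = C_(3k+2) from 0.  In the layer of a vertex g of C_n put either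
   the k vertices 3 + a, 6 + a, ..., 3k + a (a <= 1), which dominate that copy
   of H except for the two consecutive vertices a and a + 1, or the k + 1
   vertices 0, 2, 5, ..., 3k - 1, which dominate the whole copy.  The first,
   cheaper choice is made on the even vertices g of C_n (with adjustments at
   both ends of the path 0, ..., n-1 depending on n mod 4): there the
   neighbours g' of g carry the second choice, which contains f(g), and
   {a, a + 1} = {f(g') | g' ~ g}, so (g, f g') is dominated by (g', f g)
   through a type-2 edge.  This costs kn plus one per odd vertex, up to the
   end corrections. *)

Lemma domination_number_le (T : finType) (e : rel T) (D : {set T}) :
  dominating e D -> domination_number e <= #|D|.
Proof.
move=> domD; rewrite /domination_number; case: ex_minnP => m _; apply.
by apply/existsP; exists D; rewrite domD eqxx.
Qed.

Section SierpinskiLayers.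

Variables (TG TH : finType) (eG : rel TG) (eH : rel TH) (f : TG -> TH).

Definition layered_set (D : TG -> {set TH}) : {set TG * TH} :=
  [set p | p.2 \in D p.1].

Lemma card_layered_set (D : TG -> {set TH}) :
  #|layered_set D| = \sum_(g : TG) #|D g|.
Proof.
rewrite -sum1_card big_mkcond /=.
rewrite (eq_bigr (fun p => (p.2 \in D p.1) : nat)); last by move=> p _; rewrite inE.
rewrite -(pair_big xpredT xpredT (fun g h => (h \in D g) : nat)) /=.
by apply: eq_bigr => g _; rewrite -sum1_card [RHS]big_mkcond.
Qed.

Lemma layered_set_dominating (D : TG -> {set TH}) :
  (forall g h, h \notin D g ->
     (exists2 h', h' \in D g & eH h' h) \/
     (exists2 g', eG g' g & (h == f g') && (f g \in D g'))) ->
  dominating (sierpinski_rel eG eH f) (layered_set D).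
Proof.
move=> covered; apply/forallP => -[g h]; rewrite in_set /=.
case: (boolP (h \in D g)) => //= hD; apply/existsP.
have [[h' h'D hh'] | [g' gg' /andP[/eqP -> fgD]]] := covered g h hD.
- by exists (g, h'); rewrite in_set h'D /sierpinski_rel /= eqxx hh'.
- by exists (g', f g); rewrite in_set fgD /sierpinski_rel /= gg' !eqxx orbT.
Qed.

End SierpinskiLayers.

(* The wrap-around edge is spelled out, rather than taken mod m, so that
   [lia] can reason about it. *)
Definition cycle_adj (m x y : nat) : Prop :=
  y = x.+1 \/ x = y.+1 \/ (x = m.-1 /\ y = 0) \/ (y = m.-1 /\ x = 0).

Lemma cycle_adj_rel m (x y : 'I_m) : cycle_adj m x y -> cycle_rel m x y.
Proof.
have := ltn_ord x; have := ltn_ord y; rewrite /cycle_rel /=.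
move=> ym xm [e|[e|[[-> ->]|[-> ->]]]]; apply/orP.
- by left; rewrite e modn_small -?e.
- by right; rewrite e modn_small -?e.
- by left; rewrite prednK ?modnn //; lia.
- by right; rewrite prednK ?modnn //; lia.
Qed.

Section CyclePatterns.

Variable k : nat.
Local Notation m := (3 * k).+2.

Definition heavy_pattern (h : nat) : bool :=
  (h == 0) || [&& 2 <= h, h <= 3 * k - 1 & h %% 3 == 2].

Definition light_pattern (a h : nat) : bool := (a + 3 <= h) && (3 %| h - a).

Lemma card_heavy_pattern : #|[set h : 'I_m | heavy_pattern h]| <= k.+1.
Proof.
have sub : [set h : 'I_m | heavy_pattern h] \subset
    ord0 |: [set inord (3 * t + 2) | t : 'I_k].
  apply/subsetP => h; rewrite !inE /heavy_pattern => hB.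
  have hm := ltn_ord h.
  have [h0|h0] := eqVneq (h : nat) 0; first by rewrite (_ : h = ord0) ?eqxx //; exact: val_inj.
  have ht : h %/ 3 < k by lia.
  apply/orP; right; apply/imsetP; exists (Ordinal ht) => //.
  by apply: ord_inj; rewrite /= inordK; lia.
rewrite (leq_trans (subset_leq_card sub)) // cardsU1.
by rewrite (leq_add (leq_b1 _) (leq_trans (leq_imset_card _ _) _)) ?card_ord.
Qed.

Lemma card_light_pattern a : a <= 1 -> #|[set h : 'I_m | light_pattern a h]| <= k.
Proof.
move=> a1; have sub : [set h : 'I_m | light_pattern a h] \subset
    [set inord (3 * t + 3 + a) | t : 'I_k].
  apply/subsetP => h; rewrite inE /light_pattern => hA.
  have hm := ltn_ord h.
  have ht : (h - a) %/ 3 - 1 < k by lia.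
  apply/imsetP; exists (Ordinal ht) => //.
  by apply: ord_inj; rewrite /= inordK; lia.
by rewrite (leq_trans (subset_leq_card sub)) // (leq_trans (leq_imset_card _ _)) ?card_ord.
Qed.

Hypothesis k_gt0 : 0 < k.

Lemma heavy_pattern_dominates h : h < m -> ~~ heavy_pattern h ->
  exists h', [/\ h' < m, heavy_pattern h' & cycle_adj m h' h].
Proof.
rewrite /heavy_pattern /cycle_adj => hm hB.
have [->|h1] := eqVneq h 1; first by exists 0; split; lia.
have [->|h2] := eqVneq h (3 * k).+1; first by exists 0; split; lia.
have [h3|h3] := eqVneq (h %% 3) 0; first by exists h.-1; split; lia.
by exists h.+1; split; lia.
Qed.

Lemma light_pattern_dominates a h : a <= 1 -> h < m -> ~~ light_pattern a h ->
  h != a -> h != a.+1 ->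
  exists h', [/\ h' < m, light_pattern a h' & cycle_adj m h' h].
Proof.
rewrite /light_pattern /cycle_adj => a1 hm hA ha ha1.
have [hlt|hge] := ltnP h a; first by exists (3 * k).+1; split; lia.
have [h3|h3] := eqVneq ((h - a) %% 3) 1; first by exists h.-1; split; lia.
by exists h.+1; split; lia.
Qed.

End CyclePatterns.

Definition f_index (j : nat) : nat :=
  if j %% 4 == 0 then 0 else if j %% 4 == 1 then 1 else 2.

Lemma val_f_paper n k (j : 'I_n) : 0 < k -> (f_paper n k j : nat) = f_index j.
Proof.
move=> k_gt0; have : (j.+1 %% 4 = (j %% 4).+1 %% 4) by rewrite -addn1 -modnDml addn1.
rewrite /f_paper /f_index => ->; have := ltn_pmod j (isT : 0 < 4).
by case: (j %% 4) => [|[|[|[|r]]]] //= _; rewrite inordK //; lia.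
Qed.

Lemma f_indexP j :
  (f_index j = 0 /\ j %% 4 = 0) \/ (f_index j = 1 /\ j %% 4 = 1) \/
  (f_index j = 2 /\ 1 < j %% 4).
Proof. by rewrite /f_index; case: eqP => ?; [|case: eqP => ?]; lia. Qed.

(* Vertex 0 is excluded for n = 2 mod 4, where both its neighbours have
   f-image 1 and the two-vertex gap cannot be covered; vertex n-1 is excluded
   so that light layers are never adjacent when n is odd. *)
Definition light_layer (n i : nat) : bool :=
  [&& ~~ odd i, i != n.-1 & ~~ ((i == 0) && (n %% 4 == 2))].

Definition gap_start (n i : nat) : nat :=
  if (i == 0) && (n %% 4 == 1) then 0 else 1.

Lemma light_layer_gap n (i : 'I_n) h : 3 <= n -> light_layer n i ->
  (h == gap_start n i) || (h == (gap_start n i).+1) ->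
  exists j : 'I_n, [/\ cycle_rel n j i, ~~ light_layer n j & h = f_index j].
Proof.
rewrite /light_layer /gap_start => n3 light hgap; have im := ltn_ord i.
have next_lt : i.+1 < n by lia.
have [prev prev_i prev_e] : exists2 p : 'I_n, cycle_rel n p i &
    (i = 0 :> nat /\ p = n.-1 :> nat) \/ (0 < i /\ p = i.-1 :> nat).
  have prev_lt : (if (i : nat) == 0 then n.-1 else i.-1) < n by case: ifP; lia.
  exists (Ordinal prev_lt); last by rewrite /=; case: ifP; lia.
  by apply: cycle_adj_rel; rewrite /cycle_adj /=; case: ifP; lia.
have [e|e] : h = f_index prev \/ h = f_index i.+1.
  by have := f_indexP prev; have := f_indexP i.+1; case: ifP hgap; lia.
- by exists prev; split => //; lia.
- exists (Ordinal next_lt); split => //=; last by lia.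
  by apply: cycle_adj_rel; rewrite /cycle_adj /=; lia.
Qed.

Lemma heavy_pattern_f_index k n i : 0 < k -> light_layer n i ->
  heavy_pattern k (f_index i).
Proof.
rewrite /light_layer /heavy_pattern => k_gt0 /and3P[even_i _ _].
by have := f_indexP i; lia.
Qed.

Lemma sum_odd m : \sum_(i < m) odd i = m./2.
Proof. by elim: m => [|m IH]; rewrite ?big_ord0 // big_ord_recr /= IH; lia. Qed.

Lemma sum_eq_andb m c (b : bool) : \sum_(i < m) (((i : nat) == c) && b) = (c < m) && b.
Proof. by elim: m => [|m IH]; rewrite ?big_ord0 // big_ord_recr /= IH; lia. Qed.

Lemma sum_heavy_layers n :
  \sum_(i < n) ~~ light_layer n i <= n %/ 2 + (n + 3) %/ 4 - n %/ 4.
Proof.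
apply: (@leq_trans (\sum_(i < n) (odd i + (((i : nat) == n.-1) && ~~ odd n.-1)
                                   + (((i : nat) == 0) && (n %% 4 == 2))))).
  by apply: leq_sum => i _; rewrite /light_layer; lia.
by rewrite !big_split /= sum_odd !sum_eq_andb; lia.
Qed.

Section PaperLayers.

Variables n k : nat.

Definition paper_layers (i : 'I_n) : {set 'I_(3 * k).+2} :=
  if light_layer n i then [set h : 'I_(3 * k).+2 | light_pattern (gap_start n i) h]
  else [set h : 'I_(3 * k).+2 | heavy_pattern k h].

Lemma card_paper_layers :
  #|layered_set paper_layers| <= k * n + n %/ 2 + (n + 3) %/ 4 - n %/ 4.
Proof.
rewrite card_layered_set.
apply: (@leq_trans (\sum_(i < n) (k + ~~ light_layer n i))).
  apply: leq_sum => i _; rewrite /paper_layers; case: ifP => _ /=.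
    by rewrite addn0 card_light_pattern // /gap_start; case: ifP.
  by rewrite addn1 card_heavy_pattern.
rewrite big_split sum_nat_const card_ord mulnC.
by apply: leq_trans (leq_add (leqnn _) (sum_heavy_layers n)) _; lia.
Qed.


Lemma paper_layers_dominating : 3 <= n -> 0 < k ->
  dominating (sierpinski_rel (cycle_rel n) (cycle_rel (3 * k).+2) (f_paper n k))
             (layered_set paper_layers).
Proof.
move=> n_ge3 k_gt0; apply: layered_set_dominating => i h; have hm := ltn_ord h.
have in_layer (P : pred nat) : (exists h', [/\ h' < (3 * k).+2, P h' & cycle_adj (3 * k).+2 h' h]) ->
    exists2 h'' : 'I_(3 * k).+2, h'' \in [set x : 'I_(3 * k).+2 | P x] & cycle_rel _ h'' h.
  by move=> [h' [h'm Ph' adj]]; exists (Ordinal h'm); rewrite ?inE //; apply: cycle_adj_rel.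
rewrite /paper_layers; case: ifP => light; rewrite inE => hD; last first.
  by left; apply/in_layer/heavy_pattern_dominates.
have a1 : gap_start n i <= 1 by rewrite /gap_start; case: ifP.
have [hgap|] := boolP (((h : nat) == gap_start n i) || ((h : nat) == (gap_start n i).+1)).
  have [j [ji heavy_j ej]] := light_layer_gap n_ge3 light hgap.
  right; exists j => //; rewrite /paper_layers (negPf heavy_j) inE.
  rewrite val_f_paper // (heavy_pattern_f_index _ light) // andbT.
  by apply/eqP/ord_inj; rewrite val_f_paper.
rewrite negb_or => /andP[ha ha1].
by left; apply/in_layer/light_pattern_dominates.
Qed.

End PaperLayers.

Theorem mainTheorem10 (n k : nat) :
  3 <= n -> 1 <= k ->
  domination_number
    (sierpinski_rel (cycle_rel n) (cycle_rel (3 * k).+2) (f_paper n k))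
  <= k * n + n %/ 2 + (n + 3) %/ 4 - n %/ 4.
Proof.
move=> n_ge3 k_gt0.
apply: leq_trans (card_paper_layers n k).
exact/domination_number_le/paper_layers_dominating.
Qed.
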